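(* For each $\star\in\{\varepsilon,\sigma_0,*,\bowtie\}$, the edge-colored posets $L^{\mathrm{skew}}_{A_{n-1}}((P/Q)^\star)$ and $L^{\mathrm{skew}}_{A_{n-1}}(P/Q)^\star$ are isomorphic (by an isomorphism preserving order and edge colors).
   Context: Fix integers $m\ge n\ge 2$ and weakly decreasing $m$-tuples of nonnegative integers $P=(P_1,\dots,P_m)$ and $Q=(Q_1,\dots,Q_m)$ with $Q_r\le P_r$ for all $r$. The skew shape $P/Q$ is the set of cells $(r,c)$ (row $r$, column $c$, matrix convention) with $Q_r<c\le P_r$; assume no column of $P/Q$ contains more than $n$ cells. For any finite set of cells forming a skew shape (after translation), $L^{\mathrm{skew}}_{A_{n-1}}(\cdot)$ is the set of semistandard fillings with entries in $\{1,\dots,n\}$ (weakly increasing along rows, strictly increasing down columns), ordered by $S\le T$ iff $S_{r,c}\ge T_{r,c}$ for all cells; the covering $S\to T$ where $S,T$ differ only in cell $(r,c)$ with $S_{r,c}=T_{r,c}+1$ gets color $T_{r,c}\in\{1,\dots,n-1\}$. Shape operations: $(P/Q)^\varepsilon:=P/Q$; $(P/Q)^{\sigma_0}$: for each column of $P/Q$ whose cells are in rows $a+1,\dots,a+k$ ($k\ge1$), take the cells of that column in rows $a+k+1,\dots,a+n$ (the empty columns of $P/Q$ contribute nothing); $(P/Q)^*$: rotate $(P/Q)^{\sigma_0}$ by $180^\circ$; $(P/Q)^{\bowtie}$: rotate $P/Q$ by $180^\circ$ (all regarded as skew shapes after translation). Poset operations on a finite poset $R$ with edges colored by $\{1,\dots,n-1\}$: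 $R^\varepsilon:=R$; $R^{\sigma_0}$: same poset, each edge color $i$ replaced by $n-i$; $R^*$: the dual poset $\{t^*\}$ with an edge $t^*\xrightarrow{i}s^*$ for each edge $s\xrightarrow{i}t$ of $R$; $R^{\bowtie}:=(R^{\sigma_0})^*$. *)

(* cells are pairs of integers (row, column), matrix convention. *)
From Stdlib Require Import ZArith Arith List Bool.
Import ListNotations.
Open Scope Z_scope.

Definition cell := (Z * Z)%type.

Definition shape := cell -> Prop.

(* P_r for 1 <= r <= m, stored 0-indexed in a list. *)
Definition row_val (P : list nat) (r : Z) : Z :=
  Z.of_nat (nth (Z.to_nat r - 1)%nat P 0%nat).

Definition skew (m : nat) (P Q : list nat) : shape :=
  fun x => 1 <= fst x <= Z.of_nat m /\ row_val Q (fst x) < snd x <= row_val P (fst x).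

Definition shape_sigma0 (n : nat) (S : shape) : shape :=
  fun x => exists (a : Z) (k : nat), (1 <= k)%nat /\
    (forall r', S (r', snd x) <-> a + 1 <= r' <= a + Z.of_nat k) /\
    a + Z.of_nat k + 1 <= fst x <= a + Z.of_nat n.

(* rotation by 180 degrees (translation is irrelevant below) *)
Definition shape_rot (S : shape) : shape := fun x => S (- fst x, - snd x).

Inductive op := Eps | Sig0 | Star | Bowtie.

Definition shape_op (n : nat) (o : op) (S : shape) : shape :=
  match o with
  | Eps => S
  | Sig0 => shape_sigma0 n S
  | Star => shape_rot (shape_sigma0 n S)
  | Bowtie => shape_rot S
  end.

Record ecposet := ECPoset {
  carrier : Type;
  elem : carrier -> Prop;
  le : carrier -> carrier -> Prop;
  edge : carrier -> nat -> carrier -> Prop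
}.

(* L^skew_{A_{n-1}}(S): semistandard fillings of S with entries in {1..n},
   represented as functions cell -> nat vanishing outside S. *)
Definition filling := cell -> nat.

Definition is_ssyt (n : nat) (S : shape) (T : filling) : Prop :=
  (forall x, ~ S x -> T x = 0%nat) /\
  (forall x, S x -> (1 <= T x <= n)%nat) /\
  (forall r c c', S (r, c) -> S (r, c') -> c < c' -> (T (r, c) <= T (r, c'))%nat) /\
  (forall r r' c, S (r, c) -> S (r', c) -> r < r' -> (T (r, c) < T (r', c))%nat).

Definition Lskew (n : nat) (S : shape) : ecposet :=
  {| carrier := filling;
     elem := is_ssyt n S;
     le := fun A B => forall x, S x -> (B x <= A x)%nat;
     edge := fun A i B => exists x, S x /\ A x = (B x + 1)%nat /\ i = B x /\
                           (forall y, y <> x -> A y = B y) |}.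

Definition poset_sigma0 (n : nat) (R : ecposet) : ecposet :=
  {| carrier := carrier R; elem := elem R; le := le R;
     edge := fun s i t => exists j, edge R s j t /\ i = (n - j)%nat |}.

Definition poset_dual (R : ecposet) : ecposet :=
  {| carrier := carrier R; elem := elem R;
     le := fun s t => le R t s;
     edge := fun s i t => edge R t i s |}.

Definition poset_op (n : nat) (o : op) (R : ecposet) : ecposet :=
  match o with
  | Eps => R
  | Sig0 => poset_sigma0 n R
  | Star => poset_dual R
  | Bowtie => poset_dual (poset_sigma0 n R)
  end.

Definition ec_iso (A B : ecposet) : Prop :=
  exists f : carrier A -> carrier B,
    (forall x, elem A x -> elem B (f x)) /\
    (forall x y, elem A x -> elem A y -> f x = f y -> x = y) /\
    (forall y, elem B y -> exists x, elem A x /\ f x = y) /\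
    (forall x y, elem A x -> elem A y -> (le A x y <-> le B (f x) (f y))) /\
    (forall x y i, elem A x -> elem A y -> (edge A x i y <-> edge B (f x) i (f y))).

Definition weakly_decr (P : list nat) : Prop :=
  forall i j, (i <= j)%nat -> (j < length P)%nat -> (nth j P 0 <= nth i P 0)%nat.

Definition col_count (m : nat) (P Q : list nat) (c : nat) : nat :=
  length (filter (fun r => andb (Nat.ltb (nth r Q 0%nat) c ) (Nat.leb c (nth r P 0%nat)))
                 (seq 0 m)).

(* The case [Eps] is trivial and [Bowtie] holds for every shape S: rotating a
   filling by 180 degrees and replacing every entry k by n+1-k is an
   isomorphism [Lskew (rot S) ~ dual (sigma0 (Lskew S))].  The case [Star]
   then follows from [Sig0], since [sigma0] on posets is an involution.

   A column of a semistandard filling occupying rows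
   [lo+1 .. hi] is encoded by its staircase [B r w = "row r is above the
   column, or holds an entry <= w"]; the order of [Lskew] is reverse inclusion
   of staircases and an edge of color [j] adds exactly one point [(r, j)].
   The substitution [(r, v) |-> (r - v, n - v)] maps the staircases of the
   column [lo+1 .. hi] bijectively onto those of the complementary column
   [hi+1 .. lo+n], preserving inclusion and nesting between columns and
   sending color j to n - j.  Columnwise this gives the sigma_0 isomorphism
   for every shape whose columns are intervals rising to the right; the
   columns of a skew shape are of this form. *)
From Stdlib Require Import ZArith Arith List.
From Stdlib Require Import Lia Bool FunctionalExtensionality Classical.
Open Scope Z_scope.

Lemma iso_refl A : ec_iso A A.
Proof. exists (fun x => x). repeat split; eauto; tauto. Qed.

Lemma iso_trans A B C : ec_iso A B -> ec_iso B C -> ec_iso A C.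
Proof.
  intros [f (f_elem & f_inj & f_surj & f_le & f_edge)]
         [g (g_elem & g_inj & g_surj & g_le & g_edge)].
  exists (fun x => g (f x)). split; [|split; [|split; [|split]]].
  - auto.
  - intros x y Hx Hy E. apply f_inj, g_inj; auto.
  - intros z Hz. destruct (g_surj z Hz) as [y [Hy <-]].
    destruct (f_surj y Hy) as [x [Hx <-]]. eauto.
  - intros x y Hx Hy. rewrite f_le, g_le; auto. tauto.
  - intros x y i Hx Hy. rewrite f_edge, g_edge; auto. tauto.
Qed.

Lemma iso_sigma0 n A B : ec_iso A B -> ec_iso (poset_sigma0 n A) (poset_sigma0 n B).
Proof.
  intros [f (f_elem & f_inj & f_surj & f_le & f_edge)]. exists f; simpl.
  split; [|split; [|split; [|split]]]; auto.
  intros x y i Hx Hy.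
  split; intros [j [Hj ->]]; exists j; (split; [|auto]); apply f_edge; auto.
Qed.

Lemma iso_dual A B : ec_iso A B -> ec_iso (poset_dual A) (poset_dual B).
Proof.
  intros [f (f_elem & f_inj & f_surj & f_le & f_edge)]. exists f; simpl.
  split; [|split; [|split; [|split]]]; auto.
Qed.

Lemma ssyt_bound n sh T x : is_ssyt n sh T -> (T x <= n)%nat.
Proof.
  intros (T_out & T_in & _). destruct (classic (sh x)) as [Hx|Hx].
  - apply T_in; auto.
  - rewrite T_out; auto; lia.
Qed.

(* Edge colors of [Lskew n sh] lie in [1, n-1], so recoloring twice by
   [i |-> n - i] changes nothing. *)
Lemma iso_sigma0_sigma0 n sh :
  ec_iso (poset_sigma0 n (poset_sigma0 n (Lskew n sh))) (Lskew n sh).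
Proof.
  exists (fun x => x); simpl. split; [|split; [|split; [|split]]]; eauto; try tauto.
  intros T1 T2 i H1 H2. split.
  - intros [j [[k [[x (Hx & E1 & E2 & E3)] ->]] ->]].
    assert (T1 x <= n)%nat by (apply (ssyt_bound n sh); auto).
    replace (n - (n - k))%nat with k by lia. exists x; auto.
  - intros [x (Hx & E1 & E2 & E3)].
    assert (T1 x <= n)%nat by (apply (ssyt_bound n sh); auto).
    exists (n - i)%nat. split; [|lia]. exists i. split; [exists x; auto|auto].
Qed.

Lemma ssyt_same_shape n sh1 sh2 T :
  (forall x, sh1 x <-> sh2 x) -> is_ssyt n sh1 T -> is_ssyt n sh2 T.
Proof.
  intros E (T_out & T_in & T_row & T_col). split; [|split; [|split]].
  - intros x Hx; apply T_out; rewrite E; auto.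
  - intros x Hx; apply T_in; rewrite E; auto.
  - intros r c c' H1 H2; apply T_row; apply E; auto.
  - intros r r' c H1 H2; apply T_col; apply E; auto.
Qed.

Lemma iso_same_shape n sh1 sh2 :
  (forall x, sh1 x <-> sh2 x) -> ec_iso (Lskew n sh1) (Lskew n sh2).
Proof.
  intros E. exists (fun x => x); simpl. split; [|split; [|split; [|split]]].
  - intros T; apply ssyt_same_shape; auto.
  - auto.
  - intros T HT. exists T. split; auto.
    apply (ssyt_same_shape n sh2 sh1); auto. intros x; rewrite E; tauto.
  - intros T1 T2 _ _. split; intros H x Hx; apply H, E; auto.
  - intros T1 T2 i _ _.
    split; intros [x (Hx & H)]; exists x; (split; [apply E; auto|auto]).
Qed.

Definition neg (x : cell) : cell := (- fst x, - snd x).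

Lemma neg_involutive x : neg (neg x) = x.
Proof. destruct x; unfold neg; simpl; f_equal; lia. Qed.

Definition rot_fill (n : nat) (U : filling) : filling :=
  fun x => if (U (neg x) =? 0)%nat then 0%nat else (S n - U (neg x))%nat.

Lemma rot_fill_neg n U x :
  rot_fill n U (neg x) = if (U x =? 0)%nat then 0%nat else (S n - U x)%nat.
Proof. unfold rot_fill. rewrite neg_involutive. reflexivity. Qed.

Lemma rot_fill_in n sh U x : is_ssyt n sh U -> sh x ->
  rot_fill n U (neg x) = (S n - U x)%nat /\ (1 <= U x <= n)%nat.
Proof.
  intros (_ & U_in & _) Hx. rewrite rot_fill_neg. pose proof (U_in x Hx).
  destruct (Nat.eqb_spec (U x) 0); [lia | auto].
Qed.

Lemma rot_fill_ssyt n sh U :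
  is_ssyt n sh U -> is_ssyt n (shape_rot sh) (rot_fill n U).
Proof.
  intros HU. pose proof HU as (U_out & U_in & U_row & U_col).
  assert (Hval : forall x, shape_rot sh x ->
            rot_fill n U x = (S n - U (neg x))%nat /\ (1 <= U (neg x) <= n)%nat).
  { intros x Hx. rewrite <- (neg_involutive x) at 1. apply (rot_fill_in n sh); auto. }
  split; [|split; [|split]].
  - intros x Hx. unfold rot_fill. rewrite U_out; auto.
  - intros x Hx. destruct (Hval x Hx). lia.
  - intros r c c' H1 H2 Hc. destruct (Hval _ H1), (Hval _ H2).
    assert (U (neg (r, c')) <= U (neg (r, c)))%nat by (apply U_row; auto; simpl; lia).
    lia.
  - intros r r' c H1 H2 Hr. destruct (Hval _ H1), (Hval _ H2).
    assert (U (neg (r', c)) < U (neg (r, c)))%nat by (apply U_col; auto; simpl; lia).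
    lia.
Qed.

Lemma rot_fill_involutive n sh U : is_ssyt n sh U -> rot_fill n (rot_fill n U) = U.
Proof.
  intros HU. apply functional_extensionality. intros x.
  pose proof (ssyt_bound n sh U x HU). unfold rot_fill at 1. rewrite rot_fill_neg.
  destruct (Nat.eqb_spec (U x) 0) as [->|]; [reflexivity|].
  destruct (Nat.eqb_spec (S n - U x) 0); lia.
Qed.

Lemma rot_fill_ssyt_rot n sh U :
  is_ssyt n (shape_rot sh) U -> is_ssyt n sh (rot_fill n U).
Proof.
  intros HU. apply (ssyt_same_shape n (shape_rot (shape_rot sh))).
  - intros x. unfold shape_rot. fold (neg x). fold (neg (neg x)).
    rewrite neg_involutive. tauto.
  - apply rot_fill_ssyt; auto.
Qed.

Lemma rot_fill_le n sh U1 U2 :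
  is_ssyt n (shape_rot sh) U1 -> is_ssyt n (shape_rot sh) U2 ->
  ((forall x, shape_rot sh x -> (U2 x <= U1 x)%nat) <->
   (forall y, sh y -> (rot_fill n U1 y <= rot_fill n U2 y)%nat)).
Proof.
  intros H1 H2. split.
  - intros H y Hy. rewrite <- (neg_involutive y) in Hy |- *.
    destruct (rot_fill_in n _ U1 _ H1 Hy), (rot_fill_in n _ U2 _ H2 Hy).
    pose proof (H _ Hy). lia.
  - intros H x Hx. destruct (rot_fill_in n _ U1 _ H1 Hx), (rot_fill_in n _ U2 _ H2 Hx).
    pose proof (H (neg x) Hx). lia.
Qed.

Lemma rot_fill_edge n sh U1 U2 i :
  is_ssyt n (shape_rot sh) U1 -> is_ssyt n (shape_rot sh) U2 ->
  (edge (Lskew n (shape_rot sh)) U1 i U2 <->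
   exists j, edge (Lskew n sh) (rot_fill n U2) j (rot_fill n U1) /\ i = (n - j)%nat).
Proof.
  intros H1 H2. simpl. split.
  - intros [x (Hx & E_up & E_col & E_rest)].
    destruct (rot_fill_in n _ U1 _ H1 Hx), (rot_fill_in n _ U2 _ H2 Hx).
    exists (n - i)%nat. split; [|lia].
    exists (neg x). split; [exact Hx|]. split; [lia | split; [lia|]].
    intros y Hy. unfold rot_fill. rewrite E_rest; auto.
    intros E. apply Hy. rewrite <- E. symmetry. apply neg_involutive.
  - intros [j [[y (Hy & E_up & E_col & E_rest)] ->]].
    assert (Hx : shape_rot sh (neg y)) by (unfold shape_rot; fold (neg (neg y));
                                          rewrite neg_involutive; exact Hy).
    destruct (rot_fill_in n _ U1 _ H1 Hx), (rot_fill_in n _ U2 _ H2 Hx).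
    rewrite neg_involutive in *.
    exists (neg y). split; [exact Hx|]. split; [lia | split; [lia|]].
    intros x Hxy.
    rewrite <- (rot_fill_involutive n _ U1 H1), <- (rot_fill_involutive n _ U2 H2).
    unfold rot_fill at 1 3. rewrite E_rest; auto.
    intros E. apply Hxy. rewrite <- E. symmetry. apply neg_involutive.
Qed.

Lemma iso_rot n sh :
  ec_iso (Lskew n (shape_rot sh)) (poset_dual (poset_sigma0 n (Lskew n sh))).
Proof.
  exists (rot_fill n); simpl. split; [|split; [|split; [|split]]].
  - apply rot_fill_ssyt_rot.
  - intros U1 U2 H1 H2 E.
    rewrite <- (rot_fill_involutive n _ U1 H1), <- (rot_fill_involutive n _ U2 H2), E.
    reflexivity.
  - intros T HT. exists (rot_fill n T).
    split; [apply rot_fill_ssyt; auto | apply (rot_fill_involutive n sh); auto].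
  - intros U1 U2 H1 H2. apply rot_fill_le; auto.
  - intros U1 U2 i H1 H2. apply (rot_fill_edge n sh); auto.
Qed.

Section Staircase.
Variable n : nat.

Definition upward (p : nat -> bool) : Prop :=
  forall w, (w < n)%nat -> p w = true -> p (S w) = true.

Lemma upward_le p : upward p ->
  forall w w', (w <= w' <= n)%nat -> p w = true -> p w' = true.
Proof.
  intros Hup w w' [Hww' Hw'n]. revert Hw'n.
  induction Hww' as [|w' _ IH]; intros Hw'n Hp; auto.
  apply Hup; [lia | apply IH; auto; lia].
Qed.

Fixpoint least_from (p : nat -> bool) (fuel v : nat) : nat :=
  match fuel with O => v | S f => if p v then v else least_from p f (S v) end.

Definition least (p : nat -> bool) : nat := least_from p n 0.

Lemma least_from_ge p fuel v : (v <= least_from p fuel v)%nat.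
Proof.
  revert v. induction fuel as [|f IH]; intros v; simpl; [lia|].
  destruct (p v); [lia | specialize (IH (S v)); lia].
Qed.

Lemma least_from_spec p : upward p -> p n = true ->
  forall fuel v, (fuel + v = n)%nat ->
  forall w, (v <= w <= n)%nat -> ((least_from p fuel v <= w)%nat <-> p w = true).
Proof.
  intros Hup Hn. induction fuel as [|f IH]; intros v Hv w Hw; simpl.
  - assert (w = n) by lia. subst. split; auto; lia.
  - destruct (p v) eqn:Pv.
    + split; intros H; [apply (upward_le p Hup v w); auto; lia | lia].
    + destruct (Nat.eq_dec w v) as [->|Hne].
      * pose proof (least_from_ge p f (S v)). split; intros; [lia | congruence].
      * apply IH; lia.
Qed.

Lemma least_spec p : upward p -> p n = true ->
  forall w, (w <= n)%nat -> ((least p <= w)%nat <-> p w = true).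
Proof. intros Hup Hn w Hw. apply least_from_spec; auto; lia. Qed.

(* A staircase describes one strictly increasing column with entries in
   [1, n] occupying the rows [lo+1 .. hi]: [B r w] reads "row r is above
   the column, or its entry is at most w". *)
Record staircase (B : Z -> nat -> bool) (lo hi : Z) : Prop := {
  st_down : forall r0 r w, (w <= n)%nat -> r0 <= r -> B r w = true -> B r0 w = true;
  (* strictness down the column: entry <= w+1 forces the row above to <= w *)
  st_strict : forall r w, (w < n)%nat -> B r (S w) = true -> B (r - 1) w = true;
  st_up : forall r, upward (B r);
  st_top : forall r, B r n = true <-> r <= hi;
  st_bot : forall r, B r 0%nat = true <-> r <= lo }.

Lemma staircase_above B lo hi : staircase B lo hi ->
  forall r w, (w <= n)%nat -> r <= lo -> B r w = true.
Proof.
  intros HB r w Hw Hr. apply (upward_le (B r) (st_up _ _ _ HB r) 0); [lia|].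
  apply (st_bot _ _ _ HB); auto.
Qed.

Lemma staircase_below B lo hi : staircase B lo hi ->
  forall r w, (w <= n)%nat -> B r w = true -> r <= hi.
Proof.
  intros HB r w Hw Hr. apply (st_top _ _ _ HB).
  apply (upward_le (B r) (st_up _ _ _ HB r) w); auto.
Qed.

Lemma staircase_ext B1 B2 lo hi : (forall r w, (w <= n)%nat -> B1 r w = B2 r w) ->
  staircase B1 lo hi -> staircase B2 lo hi.
Proof.
  intros E [D St U T Bo]. split.
  - intros r0 r w Hw Hr. rewrite <- !E; eauto.
  - intros r w Hw. rewrite <- !E; [apply St | lia | lia]; auto.
  - intros r w Hw. rewrite <- !E; [apply U | lia | lia]; auto.
  - intros r. rewrite <- E; auto.
  - intros r. rewrite <- E; auto; lia.
Qed.

(* The complementary column: the rows [hi+1 .. lo+n], filled so that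
   [flip B r v = B (r - v) (n - v)].  In terms of entries, the new column
   lists [n+1-k] for the values [k] missing from the old one. *)
Definition flip (B : Z -> nat -> bool) : Z -> nat -> bool :=
  fun r v => B (r - Z.of_nat v) (n - v)%nat.

Definition unflip (B : Z -> nat -> bool) : Z -> nat -> bool :=
  fun r w => B (r + Z.of_nat (n - w)) (n - w)%nat.

Lemma staircase_flip B lo hi :
  staircase B lo hi -> staircase (flip B) hi (lo + Z.of_nat n).
Proof.
  intros [D St U T Bo]. unfold flip. split.
  - intros r0 r w Hw Hr. apply D; lia.
  - intros r w Hw H. replace (n - w)%nat with (S (n - S w)) by lia.
    replace (r - 1 - Z.of_nat w) with (r - Z.of_nat (S w)) by lia. apply U; [lia | auto].
  - intros r w Hw H. replace (n - w)%nat with (S (n - S w)) in H by lia.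
    replace (r - Z.of_nat (S w)) with (r - Z.of_nat w - 1) by lia. apply St; [lia | auto].
  - intros r. rewrite Nat.sub_diag, Bo. lia.
  - intros r. rewrite Nat.sub_0_r, T. lia.
Qed.

Lemma staircase_unflip B lo hi lo' : lo' = hi - Z.of_nat n ->
  staircase B lo hi -> staircase (unflip B) lo' lo.
Proof.
  intros -> [D St U T Bo]. unfold unflip. split.
  - intros r0 r w Hw Hr. apply D; lia.
  - intros r w Hw H. replace (n - w)%nat with (S (n - S w)) by lia.
    replace (r - 1 + Z.of_nat (S (n - S w))) with (r + Z.of_nat (n - S w)) by lia.
    apply U; [lia | auto].
  - intros r w Hw H. replace (n - w)%nat with (S (n - S w)) in H by lia.
    replace (r + Z.of_nat (n - S w)) with (r + Z.of_nat (S (n - S w)) - 1) by lia.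
    apply St; [lia | auto].
  - intros r. rewrite Nat.sub_diag, Bo. lia.
  - intros r. rewrite Nat.sub_0_r, T. lia.
Qed.

Lemma unflip_flip B r v : (v <= n)%nat -> unflip (flip B) r v = B r v.
Proof. intros Hv. unfold unflip, flip. f_equal; lia. Qed.

End Staircase.

Section ColumnShape.
Variable n : nat.
Variable K : Z -> bool.
Variables lo hi : Z -> Z.
Hypothesis lo_le_hi : forall c, K c = true -> lo c <= hi c.
Hypothesis columns_rise : forall c1 c2, K c1 = true -> K c2 = true -> c1 < c2 ->
  lo c2 <= lo c1 /\ hi c2 <= hi c1.

Definition colshape : shape :=
  fun x => K (snd x) = true /\ lo (snd x) < fst x <= hi (snd x).

Definition in_colshape (x : cell) : bool :=
  K (snd x) && (lo (snd x) <? fst x) && (fst x <=? hi (snd x)).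

Lemma in_colshape_spec x : in_colshape x = true <-> colshape x.
Proof. unfold in_colshape, colshape. rewrite !andb_true_iff, Z.ltb_lt, Z.leb_le. tauto. Qed.

Definition profile (T : filling) (c : Z) : Z -> nat -> bool :=
  fun r w => (r <=? lo c) || ((lo c <? r) && (r <=? hi c) && (T (r, c) <=? w)%nat).

Lemma profile_true T c r w : profile T c r w = true <->
  r <= lo c \/ (lo c < r <= hi c /\ (T (r, c) <= w)%nat).
Proof.
  unfold profile. rewrite orb_true_iff, !andb_true_iff, !Z.leb_le, Z.ltb_lt, Nat.leb_le.
  tauto.
Qed.

Lemma ssyt_entry T c r : is_ssyt n colshape T -> K c = true -> lo c < r <= hi c ->
  (1 <= T (r, c) <= n)%nat.
Proof. intros (_ & T_in & _) Kc Hr. apply T_in. split; auto. Qed.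

Lemma ssyt_staircase T c : is_ssyt n colshape T -> K c = true ->
  staircase n (profile T c) (lo c) (hi c).
Proof.
  intros HT Kc. pose proof HT as (_ & _ & _ & T_col). pose proof (lo_le_hi c Kc) as Hcol.
  assert (T_col' : forall r r', lo c < r -> r < r' <= hi c -> (T (r, c) < T (r', c))%nat)
    by (intros r r' Hr Hr'; apply T_col; [split | split | ]; simpl; auto; lia).
  split.
  - intros r0 r w Hw Hr. rewrite !profile_true.
    destruct (Z_le_gt_dec r0 (lo c)); [left; lia|].
    intros [H|[H1 H2]]; [lia|right]. split; [lia|].
    destruct (Z.eq_dec r0 r) as [->|]; auto.
    pose proof (T_col' r0 r ltac:(lia) ltac:(lia)). lia.
  - intros r w Hw. rewrite !profile_true.
    destruct (Z_le_gt_dec (r - 1) (lo c)); [left; lia|].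
    intros [H|[H1 H2]]; [lia|right]. split; [lia|].
    pose proof (T_col' (r - 1) r ltac:(lia) ltac:(lia)). lia.
  - intros r w Hw. rewrite !profile_true. lia.
  - intros r. rewrite profile_true. split; [lia|].
    intros Hr. destruct (Z_le_gt_dec r (lo c)); [left; lia|right].
    pose proof (ssyt_entry T c r HT Kc ltac:(lia)). lia.
  - intros r. rewrite profile_true. split; [|lia].
    intros [H|[Hr H]]; auto. pose proof (ssyt_entry T c r HT Kc Hr). lia.
Qed.

Lemma ssyt_nested T c1 c2 : is_ssyt n colshape T -> K c1 = true -> K c2 = true ->
  c1 < c2 -> forall r w, profile T c2 r w = true -> profile T c1 r w = true.
Proof.
  intros (_ & _ & T_row & _) K1 K2 Hc r w. destruct (columns_rise c1 c2 K1 K2 Hc) as [Hlo Hhi].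
  rewrite !profile_true. destruct (Z_le_gt_dec r (lo c1)); [left; lia|].
  intros [H|[H1 H2]]; [lia|right]. split; [lia|].
  assert (T (r, c1) <= T (r, c2))%nat by (apply T_row; [split | split | ]; simpl; auto; lia).
  lia.
Qed.

Lemma staircases_ssyt T : (forall x, ~ colshape x -> T x = 0%nat) ->
  (forall c, K c = true -> staircase n (profile T c) (lo c) (hi c)) ->
  (forall c1 c2, K c1 = true -> K c2 = true -> c1 < c2 -> forall r w, (w <= n)%nat ->
      profile T c2 r w = true -> profile T c1 r w = true) ->
  is_ssyt n colshape T.
Proof.
  intros T_out Hst Hnest.
  assert (T_in : forall x, colshape x -> (1 <= T x <= n)%nat).
  { intros [r c] [Kc Hr]; simpl in *. pose proof (Hst c Kc) as [_ _ _ Top Bot].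
    assert (Hn : profile T c r n = true) by (apply Top; lia).
    rewrite profile_true in Hn. split; [|lia].
    destruct (Nat.eq_dec (T (r, c)) 0) as [E|]; [|lia].
    assert (H0 : profile T c r 0 = true) by (apply profile_true; right; lia).
    apply Bot in H0. lia. }
  split; [auto | split; [auto | split]].
  - intros r c c' [K1 H1] [K2 H2] Hc; simpl in *.
    pose proof (T_in (r, c') (conj K2 H2)).
    assert (A : profile T c' r (T (r, c')) = true) by (apply profile_true; lia).
    apply (Hnest c c' K1 K2 Hc r) in A; [|lia]. rewrite profile_true in A. lia.
  - intros r r' c [K1 H1] [K2 H2] Hr; simpl in *.
    pose proof (T_in (r', c) (conj K2 H2)). pose proof (Hst c K1) as [Down Strict _ _ _].
    destruct (T (r', c)) as [|w] eqn:E; [lia|].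
    assert (A : profile T c r' (S w) = true) by (apply profile_true; lia).
    apply Strict, (Down r) in A; [|lia|lia|lia]. rewrite profile_true in A. lia.
Qed.

Definition of_profiles (B : Z -> Z -> nat -> bool) : filling :=
  fun x => if in_colshape x then least n (B (snd x) (fst x)) else 0%nat.

Lemma profile_of_profiles B :
  (forall c, K c = true -> staircase n (B c) (lo c) (hi c)) ->
  forall c, K c = true -> forall r w, (w <= n)%nat -> profile (of_profiles B) c r w = B c r w.
Proof.
  intros Hst c Kc r w Hw. pose proof (lo_le_hi c Kc) as Hcol. pose proof (Hst c Kc) as HB.
  apply eq_iff_eq_true. rewrite profile_true.
  destruct (Z_le_gt_dec r (lo c)).
  - split; [intros _ | auto]. apply (staircase_above n _ _ _ HB); auto.
  - destruct (Z_le_gt_dec r (hi c)).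
    + unfold of_profiles.
      replace (in_colshape (r, c)) with true by (symmetry; apply in_colshape_spec; split; simpl; auto; lia).
      simpl. rewrite (least_spec n (B c r)); [| apply HB | apply HB; lia | auto].
      split; [intros [?|[_ ?]]; [lia | auto] | intros; right; split; [lia | auto]].
    + split; [lia|]. intros H. apply (staircase_below n _ _ _ HB) in H; auto. lia.
Qed.

Lemma of_profiles_ssyt B :
  (forall c, K c = true -> staircase n (B c) (lo c) (hi c)) ->
  (forall c1 c2, K c1 = true -> K c2 = true -> c1 < c2 -> forall r w, (w <= n)%nat ->
      B c2 r w = true -> B c1 r w = true) ->
  is_ssyt n colshape (of_profiles B).
Proof.
  intros Hst Hnest. apply staircases_ssyt.
  - intros x Hx. unfold of_profiles.
    destruct (in_colshape x) eqn:E; auto. apply in_colshape_spec in E. tauto.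
  - intros c Kc. apply (staircase_ext n (B c)); auto.
    intros r w Hw. symmetry. apply profile_of_profiles; auto.
  - intros c1 c2 K1 K2 Hc r w Hw. rewrite !profile_of_profiles; auto. apply Hnest; auto.
Qed.

Lemma ssyt_le_profile T1 T2 : is_ssyt n colshape T1 -> is_ssyt n colshape T2 ->
  ((forall x, colshape x -> (T2 x <= T1 x)%nat) <->
   (forall c, K c = true -> forall r w, (w <= n)%nat ->
      profile T1 c r w = true -> profile T2 c r w = true)).
Proof.
  intros H1 H2. split.
  - intros H c Kc r w Hw. rewrite !profile_true.
    intros [A|[A1 A2]]; [left; auto | right; split; auto].
    assert (T2 (r, c) <= T1 (r, c))%nat by (apply H; split; auto). lia.
  - intros H [r c] [Kc Hr]; simpl in *. pose proof (ssyt_entry T1 c r H1 Kc Hr).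
    assert (A : profile T1 c r (T1 (r, c)) = true) by (apply profile_true; lia).
    apply H in A; auto; [|lia]. rewrite profile_true in A. lia.
Qed.

Lemma ssyt_eq_profile T1 T2 : is_ssyt n colshape T1 -> is_ssyt n colshape T2 ->
  (forall c, K c = true -> forall r w, (w <= n)%nat -> profile T1 c r w = profile T2 c r w) ->
  T1 = T2.
Proof.
  intros H1 H2 E. apply functional_extensionality. intros x.
  destruct (classic (colshape x)) as [Hx|Hx].
  - assert (T2 x <= T1 x)%nat.
    { apply (proj2 (ssyt_le_profile T1 T2 H1 H2)); auto.
      intros c Kc r w Hw; rewrite E; auto. }
    assert (T1 x <= T2 x)%nat.
    { apply (proj2 (ssyt_le_profile T2 T1 H2 H1)); auto.
      intros c Kc r w Hw; rewrite E; auto. }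
    lia.
  - destruct H1 as (O1 & _), H2 as (O2 & _). rewrite O1, O2; auto.
Qed.

Definition single_flip (T1 T2 : filling) (c r : Z) (j : nat) : Prop :=
  K c = true /\ profile T1 c r j = false /\ profile T2 c r j = true /\
  forall c' r' w', K c' = true -> (w' <= n)%nat -> (c', r', w') <> (c, r, j) ->
    profile T1 c' r' w' = profile T2 c' r' w'.

Definition profile_edge (T1 T2 : filling) (j : nat) : Prop :=
  (1 <= j < n)%nat /\ exists c r, single_flip T1 T2 c r j.

Lemma edge_profile_edge T1 T2 j : is_ssyt n colshape T1 -> is_ssyt n colshape T2 ->
  edge (Lskew n colshape) T1 j T2 -> profile_edge T1 T2 j.
Proof.
  intros H1 H2 [[r c] [[Kc Hr] [E_up [-> E_rest]]]]; simpl in *.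
  pose proof (ssyt_entry T1 c r H1 Kc Hr). pose proof (ssyt_entry T2 c r H2 Kc Hr).
  split; [lia|]. exists c, r. split; [auto | split; [| split]].
  - apply not_true_is_false. rewrite profile_true. lia.
  - apply profile_true. lia.
  - intros c' r' w' Kc' Hw' Hne. apply eq_iff_eq_true. rewrite !profile_true.
    destruct (Z.eq_dec c' c) as [->|Hc]; [destruct (Z.eq_dec r' r) as [->|Hr']|].
    + assert (w' <> T2 (r, c)) by congruence. rewrite E_up. lia.
    + rewrite (E_rest (r', c)); [tauto | congruence].
    + rewrite (E_rest (r', c')); [tauto | congruence].
Qed.

Lemma profile_edge_edge T1 T2 j : is_ssyt n colshape T1 -> is_ssyt n colshape T2 ->
  profile_edge T1 T2 j -> edge (Lskew n colshape) T1 j T2.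
Proof.
  intros H1 H2 [Hj [c [r [Kc [B1 [B2 Same]]]]]].
  rewrite <- not_true_iff_false, profile_true in B1. rewrite profile_true in B2.
  assert (Hr : lo c < r <= hi c) by lia.
  pose proof (ssyt_entry T1 c r H1 Kc Hr). pose proof (ssyt_entry T2 c r H2 Kc Hr).
  assert (Same_rc : forall w, (w <= n)%nat -> w <> j ->
            ((T1 (r, c) <= w)%nat <-> (T2 (r, c) <= w)%nat)).
  { intros w Hw Hwj. pose proof (Same c r w Kc Hw ltac:(congruence)) as Q.
    apply eq_iff_eq_true in Q. rewrite !profile_true in Q. lia. }
  assert (E1 : T1 (r, c) = S j) by (pose proof (Same_rc (S j)); lia).
  assert (E2 : T2 (r, c) = j) by (destruct j; [lia|]; pose proof (Same_rc j); lia).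
  exists (r, c). split; [split; auto | split; [lia | split; [auto|]]].
  intros [r' c'] Hne. destruct (classic (colshape (r', c'))) as [[Kc' Hr']|Hout].
  - simpl in *. pose proof (ssyt_entry T1 c' r' H1 Kc' Hr').
    pose proof (ssyt_entry T2 c' r' H2 Kc' Hr').
    assert (Hne' : forall w, (c', r', w) <> (c, r, j)) by congruence.
    pose proof (Same c' r' (T1 (r', c')) Kc' ltac:(lia) (Hne' _)) as Q1.
    pose proof (Same c' r' (T2 (r', c')) Kc' ltac:(lia) (Hne' _)) as Q2.
    apply eq_iff_eq_true in Q1, Q2. rewrite !profile_true in Q1, Q2. lia.
  - destruct H1 as (O1 & _), H2 as (O2 & _). rewrite O1, O2; auto.
Qed.

End ColumnShape.

Section Sigma0.
Variable n : nat.
Variables a b : Z -> Z.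
Hypothesis a_le_b : forall c, a c <= b c.
Hypothesis height_le_n : forall c, b c <= a c + Z.of_nat n.
Hypothesis columns_rise : forall c1 c2, c1 < c2 -> a c2 <= a c1 /\ b c2 <= b c1.

Definition nonempty (c : Z) : bool := a c <? b c.
Definition top (c : Z) : Z := a c + Z.of_nat n.

Definition base_shape : shape := colshape nonempty a b.
(* Its sigma_0 transform: nonempty column [c] becomes rows [b c + 1 .. a c + n]. *)
Definition compl_shape : shape := colshape nonempty b top.

Lemma base_lo_le_hi c : nonempty c = true -> a c <= b c.
Proof. intros _. apply a_le_b. Qed.

Lemma compl_lo_le_hi c : nonempty c = true -> b c <= top c.
Proof. intros _. apply height_le_n. Qed.

Lemma base_rise c1 c2 : nonempty c1 = true -> nonempty c2 = true -> c1 < c2 ->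
  a c2 <= a c1 /\ b c2 <= b c1.
Proof. intros _ _. apply columns_rise. Qed.

Lemma compl_rise c1 c2 : nonempty c1 = true -> nonempty c2 = true -> c1 < c2 ->
  b c2 <= b c1 /\ top c2 <= top c1.
Proof. intros _ _ Hc. destruct (columns_rise c1 c2 Hc). unfold top. lia. Qed.

Definition to_base (U : filling) : filling :=
  of_profiles n nonempty a b (fun c => unflip n (profile b top U c)).

Definition to_compl (T : filling) : filling :=
  of_profiles n nonempty b top (fun c => flip n (profile a b T c)).

Lemma unflip_staircase U c : is_ssyt n compl_shape U -> nonempty c = true ->
  staircase n (unflip n (profile b top U c)) (a c) (b c).
Proof.
  intros HU Kc. apply staircase_unflip with (hi := top c); [unfold top; lia|].
  apply (ssyt_staircase n nonempty b top compl_lo_le_hi); auto.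
Qed.

Lemma flip_staircase T c : is_ssyt n base_shape T -> nonempty c = true ->
  staircase n (flip n (profile a b T c)) (b c) (top c).
Proof.
  intros HT Kc. apply staircase_flip.
  apply (ssyt_staircase n nonempty a b base_lo_le_hi); auto.
Qed.

Lemma to_base_ssyt U : is_ssyt n compl_shape U -> is_ssyt n base_shape (to_base U).
Proof.
  intros HU. apply of_profiles_ssyt; [exact base_lo_le_hi | intros; apply unflip_staircase; auto|].
  intros c1 c2 K1 K2 Hc r w Hw. unfold unflip.
  apply (ssyt_nested n nonempty b top compl_rise U); auto.
Qed.

Lemma to_compl_ssyt T : is_ssyt n base_shape T -> is_ssyt n compl_shape (to_compl T).
Proof.
  intros HT. apply of_profiles_ssyt; [exact compl_lo_le_hi | intros; apply flip_staircase; auto|].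
  intros c1 c2 K1 K2 Hc r w Hw. unfold flip.
  apply (ssyt_nested n nonempty a b base_rise T); auto.
Qed.

Lemma profile_to_base U : is_ssyt n compl_shape U -> forall c, nonempty c = true ->
  forall r w, (w <= n)%nat ->
  profile a b (to_base U) c r w = profile b top U c (r + Z.of_nat (n - w)) (n - w).
Proof.
  intros HU c Kc r w Hw. unfold to_base.
  rewrite (profile_of_profiles n nonempty a b base_lo_le_hi); auto.
  intros; apply unflip_staircase; auto.
Qed.

Lemma profile_from_base U : is_ssyt n compl_shape U -> forall c, nonempty c = true ->
  forall r v, (v <= n)%nat ->
  profile b top U c r v = profile a b (to_base U) c (r - Z.of_nat v) (n - v).
Proof.
  intros HU c Kc r v Hv. rewrite profile_to_base; auto; [|lia]. f_equal; lia.
Qed.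

Lemma to_base_to_compl T : is_ssyt n base_shape T -> to_base (to_compl T) = T.
Proof.
  intros HT. pose proof (to_compl_ssyt T HT) as HU.
  apply (ssyt_eq_profile n nonempty a b); auto; [apply to_base_ssyt; auto|].
  intros c Kc r w Hw. rewrite profile_to_base; auto. unfold to_compl.
  rewrite (profile_of_profiles n nonempty b top compl_lo_le_hi);
    [exact (unflip_flip n _ r w Hw) | intros; apply flip_staircase; auto | auto | lia].
Qed.

Lemma to_base_inj U1 U2 : is_ssyt n compl_shape U1 -> is_ssyt n compl_shape U2 ->
  to_base U1 = to_base U2 -> U1 = U2.
Proof.
  intros H1 H2 E. apply (ssyt_eq_profile n nonempty b top); auto.
  intros c Kc r w Hw. rewrite (profile_from_base U1), (profile_from_base U2), E; auto.
Qed.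

Lemma to_base_le U1 U2 : is_ssyt n compl_shape U1 -> is_ssyt n compl_shape U2 ->
  ((forall x, compl_shape x -> (U2 x <= U1 x)%nat) <->
   (forall x, base_shape x -> (to_base U2 x <= to_base U1 x)%nat)).
Proof.
  intros H1 H2. pose proof (to_base_ssyt U1 H1) as F1. pose proof (to_base_ssyt U2 H2) as F2.
  unfold compl_shape, base_shape.
  rewrite (ssyt_le_profile n nonempty b top U1 U2), (ssyt_le_profile n nonempty a b); auto.
  split; intros Hle c Kc r w Hw.
  - rewrite !profile_to_base; auto. apply Hle; auto; lia.
  - rewrite (profile_from_base U1), (profile_from_base U2); auto. apply Hle; auto; lia.
Qed.

(* A single staircase flip at [(c, r, i)] corresponds to one at [(c, r - i, n - i)]. *)
Lemma to_base_profile_edge U1 U2 i : is_ssyt n compl_shape U1 -> is_ssyt n compl_shape U2 ->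
  (profile_edge n nonempty b top U1 U2 i <->
   profile_edge n nonempty a b (to_base U1) (to_base U2) (n - i)).
Proof.
  intros H1 H2. split.
  - intros [Hi [c [r [Kc [B1 [B2 Same]]]]]]. split; [lia|].
    exists c, (r - Z.of_nat i). split; [auto|].
    rewrite !profile_to_base; auto; [|lia|lia].
    replace (r - Z.of_nat i + Z.of_nat (n - (n - i))) with r by lia.
    replace (n - (n - i))%nat with i by lia. split; [auto | split; [auto|]].
    intros c' r' w' Kc' Hw' Hne. rewrite !profile_to_base; auto. apply Same; auto; [lia|].
    intros E. injection E as -> ? ?. apply Hne. f_equal; [f_equal|]; lia.
  - intros [Hi [c [r [Kc [B1 [B2 Same]]]]]]. split; [lia|].
    exists c, (r + Z.of_nat i). split; [auto|].
    rewrite !(profile_from_base U1), !(profile_from_base U2); auto; [|lia|lia].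
    replace (r + Z.of_nat i - Z.of_nat i) with r by lia. split; [auto | split; [auto|]].
    intros c' r' w' Kc' Hw' Hne.
    rewrite (profile_from_base U1), (profile_from_base U2); auto. apply Same; auto; [lia|].
    intros E. injection E as -> ? ?. apply Hne. f_equal; [f_equal|]; lia.
Qed.

Lemma to_base_edge U1 U2 i : is_ssyt n compl_shape U1 -> is_ssyt n compl_shape U2 ->
  (edge (Lskew n compl_shape) U1 i U2 <->
   exists j, edge (Lskew n base_shape) (to_base U1) j (to_base U2) /\ i = (n - j)%nat).
Proof.
  intros H1 H2. pose proof (to_base_ssyt U1 H1) as F1. pose proof (to_base_ssyt U2 H2) as F2.
  split.
  - intros E. apply (edge_profile_edge n nonempty b top) in E; auto.
    assert (Hi : (1 <= i < n)%nat) by apply E.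
    exists (n - i)%nat. split; [|lia].
    apply (profile_edge_edge n nonempty a b); auto. apply to_base_profile_edge; auto.
  - intros [j [E ->]]. apply (edge_profile_edge n nonempty a b) in E; auto.
    assert (Hj : (1 <= j < n)%nat) by apply E.
    apply (profile_edge_edge n nonempty b top); auto. apply to_base_profile_edge; auto.
    replace (n - (n - j))%nat with j by lia. auto.
Qed.

Lemma iso_sigma0_colshape :
  ec_iso (Lskew n compl_shape) (poset_sigma0 n (Lskew n base_shape)).
Proof.
  exists to_base; simpl. split; [|split; [|split; [|split]]].
  - exact to_base_ssyt.
  - exact to_base_inj.
  - intros T HT. exists (to_compl T).
    split; [apply to_compl_ssyt; auto | apply to_base_to_compl; auto].
  - exact to_base_le.
  - exact to_base_edge.
Qed.

End Sigma0.

Lemma filter_downward_prefix (g : nat -> bool) m :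
  (forall i j, (i <= j)%nat -> (j < m)%nat -> g j = true -> g i = true) ->
  forall i, (i < m)%nat -> (g i = true <-> (i < length (filter g (seq 0 m)))%nat).
Proof.
  induction m as [|m IH]; intros Hdown i Hi; [lia|].
  rewrite seq_S, filter_app, length_app. simpl.
  assert (Hlen : (length (filter g (seq 0 m)) <= m)%nat).
  { rewrite <- (length_seq m 0) at 2. apply filter_length_le. }
  assert (IH' : forall i, (i < m)%nat -> (g i = true <-> (i < length (filter g (seq 0 m)))%nat)).
  { apply IH. intros i' j Hij Hj. apply Hdown; lia. }
  destruct (g m) eqn:Gm; simpl.
  - assert (Hall : length (filter g (seq 0 m)) = m).
    { destruct (Nat.eq_dec (length (filter g (seq 0 m))) m) as [|Hne]; auto.
      assert (g (length (filter g (seq 0 m))) = true) as G by (apply (Hdown _ m); auto; lia).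
      apply IH' in G; lia. }
    split; [lia|]. intros _. apply (Hdown i m); auto; lia.
  - destruct (Nat.eq_dec i m) as [->|]; [split; [congruence | lia]|].
    rewrite IH'; lia.
Qed.

Lemma filter_interval_length A B m : (A <= B)%nat ->
  length (filter (fun i => (A <=? i)%nat && (i <? B)%nat) (seq 0 m)) =
  (Nat.min B m - Nat.min A m)%nat.
Proof.
  intros HAB. induction m as [|m IH]; [simpl; lia|].
  rewrite seq_S, filter_app, length_app, IH. simpl.
  destruct (Nat.leb_spec A m), (Nat.ltb_spec m B); simpl; lia.
Qed.

Definition rows_reaching (L : list nat) (m : nat) (c : Z) : nat :=
  length (filter (fun i => c <=? Z.of_nat (nth i L 0%nat)) (seq 0 m)).

Lemma rows_reaching_spec L m c : length L = m -> weakly_decr L ->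
  (rows_reaching L m c <= m)%nat /\
  forall i, (i < m)%nat -> (c <= Z.of_nat (nth i L 0%nat) <-> (i < rows_reaching L m c)%nat).
Proof.
  intros Hlen Hdecr. split.
  - unfold rows_reaching. rewrite <- (length_seq m 0) at 2. apply filter_length_le.
  - intros i Hi. unfold rows_reaching. rewrite <- filter_downward_prefix; auto.
    + rewrite Z.leb_le; tauto.
    + intros i' j Hij Hj G. rewrite Z.leb_le in *.
      pose proof (Hdecr i' j Hij ltac:(lia)). lia.
Qed.

Lemma rows_reaching_antitone L m c1 c2 : length L = m -> weakly_decr L -> c1 < c2 ->
  (rows_reaching L m c2 <= rows_reaching L m c1)%nat.
Proof.
  intros Hlen Hdecr Hc.
  destruct (rows_reaching_spec L m c1) as [_ H1]; auto.
  destruct (rows_reaching_spec L m c2) as [B2 H2]; auto.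
  destruct (rows_reaching L m c2) as [|k] eqn:E; [lia|].
  assert (Hk : (k < m)%nat) by lia. pose proof (proj2 (H2 k Hk) ltac:(lia)).
  pose proof (proj1 (H1 k Hk) ltac:(lia)). lia.
Qed.

Section SkewShape.
Variables (m n : nat) (P Q : list nat).
Hypothesis P_length : length P = m.
Hypothesis Q_length : length Q = m.
Hypothesis P_decr : weakly_decr P.
Hypothesis Q_decr : weakly_decr Q.
Hypothesis Q_le_P : forall r, (r < m)%nat -> (nth r Q 0 <= nth r P 0)%nat.
Hypothesis column_le_n : forall c, (col_count m P Q c <= n)%nat.

(* Column [c] of [P/Q] consists of the rows [skew_lo c + 1 .. skew_hi c]. *)
Definition skew_lo (c : Z) : Z := Z.of_nat (rows_reaching Q m c).
Definition skew_hi (c : Z) : Z := Z.of_nat (rows_reaching P m c).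

Lemma skew_lo_le_hi c : skew_lo c <= skew_hi c.
Proof.
  unfold skew_lo, skew_hi.
  destruct (rows_reaching_spec Q m c) as [BQ HQ]; auto.
  destruct (rows_reaching_spec P m c) as [_ HP]; auto.
  destruct (rows_reaching Q m c) as [|k] eqn:E; [lia|].
  assert (Hk : (k < m)%nat) by lia. pose proof (proj2 (HQ k Hk) ltac:(lia)).
  pose proof (Q_le_P k Hk). pose proof (proj1 (HP k Hk) ltac:(lia)). lia.
Qed.

Lemma skew_rise c1 c2 : c1 < c2 -> skew_lo c2 <= skew_lo c1 /\ skew_hi c2 <= skew_hi c1.
Proof.
  intros Hc. unfold skew_lo, skew_hi.
  pose proof (rows_reaching_antitone Q m c1 c2). pose proof (rows_reaching_antitone P m c1 c2).
  split; apply Nat2Z.inj_le; auto.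
Qed.

Lemma skew_height c : skew_hi c <= skew_lo c + Z.of_nat n.
Proof.
  pose proof (skew_lo_le_hi c). unfold skew_lo, skew_hi in *.
  destruct (rows_reaching_spec Q m c) as [BQ HQ]; auto.
  destruct (rows_reaching_spec P m c) as [BP HP]; auto.
  destruct (Z_le_gt_dec c 0).
  - (* every row reaches a nonpositive column, so it has no cells *)
    destruct (Nat.eq_dec m 0) as [->|Hm]; [lia|].
    assert (m - 1 < rows_reaching Q m c)%nat by (apply HQ; lia). lia.
  - pose proof (column_le_n (Z.to_nat c)) as Hc. unfold col_count in Hc.
    rewrite (filter_ext_in _ (fun i => (rows_reaching Q m c <=? i)%nat &&
                                      (i <? rows_reaching P m c)%nat)) in Hc.
    + rewrite filter_interval_length in Hc; lia.
    + intros i Hi. apply in_seq in Hi. apply eq_iff_eq_true.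
      rewrite !andb_true_iff, !Nat.ltb_lt, !Nat.leb_le.
      pose proof (HQ i ltac:(lia)). pose proof (HP i ltac:(lia)). lia.
Qed.

Lemma skew_cell r c : skew m P Q (r, c) <-> skew_lo c < r <= skew_hi c.
Proof.
  unfold skew, skew_lo, skew_hi, row_val. cbn [fst snd].
  destruct (rows_reaching_spec Q m c) as [BQ HQ]; auto.
  destruct (rows_reaching_spec P m c) as [BP HP]; auto.
  split.
  - intros [Hr [H1 H2]].
    pose proof (HQ (Z.to_nat r - 1)%nat ltac:(lia)). pose proof (HP (Z.to_nat r - 1)%nat ltac:(lia)).
    lia.
  - intros Hr. split; [lia|].
    pose proof (HQ (Z.to_nat r - 1)%nat ltac:(lia)). pose proof (HP (Z.to_nat r - 1)%nat ltac:(lia)).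
    lia.
Qed.

Lemma skew_base_shape x : skew m P Q x <-> base_shape skew_lo skew_hi x.
Proof.
  destruct x as [r c]. rewrite skew_cell.
  unfold base_shape, colshape, nonempty. cbn [fst snd]. rewrite Z.ltb_lt. lia.
Qed.

Lemma skew_compl_shape x :
  shape_sigma0 n (skew m P Q) x <-> compl_shape n skew_lo skew_hi x.
Proof.
  destruct x as [r c].
  unfold shape_sigma0, compl_shape, colshape, nonempty, top. cbn [fst snd].
  rewrite Z.ltb_lt. split.
  - intros [a' [k [Hk [Hcol Hr]]]].
    pose proof (proj1 (skew_cell (a' + 1) c) (proj2 (Hcol (a' + 1)) ltac:(lia))).
    pose proof (proj1 (skew_cell (a' + Z.of_nat k) c) (proj2 (Hcol (a' + Z.of_nat k)) ltac:(lia))).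
    assert (skew_lo c + 1 <= a' + Z.of_nat k /\ a' + 1 <= skew_hi c) by lia.
    pose proof (proj1 (Hcol (skew_lo c + 1)) (proj2 (skew_cell (skew_lo c + 1) c) ltac:(lia))).
    pose proof (proj1 (Hcol (skew_hi c)) (proj2 (skew_cell (skew_hi c) c) ltac:(lia))).
    lia.
  - intros [Hk Hr]. exists (skew_lo c), (Z.to_nat (skew_hi c - skew_lo c)).
    split; [lia | split; [|lia]].
    intros r'. rewrite skew_cell. lia.
Qed.

Lemma iso_sigma0_skew :
  ec_iso (Lskew n (shape_sigma0 n (skew m P Q))) (poset_sigma0 n (Lskew n (skew m P Q))).
Proof.
  apply iso_trans with (Lskew n (compl_shape n skew_lo skew_hi));
    [apply iso_same_shape, skew_compl_shape|].
  apply iso_trans with (poset_sigma0 n (Lskew n (base_shape skew_lo skew_hi))).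
  - apply iso_sigma0_colshape; [exact skew_lo_le_hi | exact skew_height | exact skew_rise].
  - apply iso_sigma0, iso_same_shape. intros x. rewrite skew_base_shape. tauto.
Qed.

End SkewShape.

Close Scope Z_scope.

Theorem proposition8p2 (m n : nat) (P Q : list nat) :
  (2 <= n)%nat -> (n <= m)%nat ->
  length P = m -> length Q = m ->
  weakly_decr P -> weakly_decr Q ->
  (forall r, (r < m)%nat -> (nth r Q 0 <= nth r P 0)%nat) ->
  (forall c, (col_count m P Q c <= n)%nat) ->
  forall o : op,
    ec_iso (Lskew n (shape_op n o (skew m P Q)))
           (poset_op n o (Lskew n (skew m P Q))).
Proof.
  intros _ _ HlP HlQ HdP HdQ HQP Hcol o.
  pose proof (iso_sigma0_skew m n P Q HlP HlQ HdP HdQ HQP Hcol) as Hsigma0.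
  destruct o; cbn [shape_op poset_op].
  - apply iso_refl.
  - exact Hsigma0.
  - apply iso_trans with (poset_dual (poset_sigma0 n (Lskew n (shape_sigma0 n (skew m P Q))))).
    + apply iso_rot.
    + apply iso_dual. apply iso_trans with (poset_sigma0 n (poset_sigma0 n (Lskew n (skew m P Q)))).
      * apply iso_sigma0, Hsigma0.
      * apply iso_sigma0_sigma0.
  - apply iso_rot.
Qed.
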